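(* Let $b_1$ be a positive integer with $b_1<n^*$. If $(\sigma^1,\sigma^2)$ is a Nash equilibrium of $\Gamma(b_1,1)$, then for every positive integer $b_2<m^*$ there exists $\hat\sigma^2\in\Delta(\mathcal A_2)$ (with $\mathcal A_2$ for budget $b_2$) such that $(\sigma^1,\hat\sigma^2)$ is a Nash equilibrium of $\Gamma(b_1,b_2)$; that is, equilibrium inspection strategies of $\Gamma(b_1,1)$ are equilibrium inspection strategies of every $\Gamma(b_1,b_2)$ with $b_2<m^*$.
   Context: Detection model: finite nonempty sets $\mathcal V$, $\mathcal E$, monitoring sets $\mathcal C_i\subseteq\mathcal E$ ($i\in\mathcal V$) with every $e\in\mathcal E$ in some $\mathcal C_i$; $\mathcal C_S=\bigcup_{i\in S}\mathcal C_i$; $F(S,T)=|\mathcal C_S\cap T|$. Set cover: $S\subseteq\mathcal V$ with $\mathcal C_S=\mathcal E$; $n^*$ = minimum size of a set cover. Set packing: $T\subseteq\mathcal E$ with $|\mathcal C_i\cap T|\le1$ for all $i$; $m^*$ = maximum size of a set packing. Game $\Gamma(b_1,b_2)$ ($b_1,b_2$ positive integers): $\mathcal A_1=\{S\subseteq\mathcal V:|S|\le b_1\}$, $\mathcal A_2=\{T\subseteq\mathcal E:|T|\le b_2\}$; mixed strategies $\sigma^1\in\Delta(\mathcal A_1)$, $\sigma^2\in\Delta(\mathcal A_2)$ (independent); payoffs $U_1=\mathbb E[F(S,T)]$, $U_2=\mathbb E[|T|]-\mathbb E[F(S,T)]$; Nash equilibrium in mixed strategies as usual. Note that the inspector's strategy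 set $\Delta(\mathcal A_1)$ does not depend on $b_2$. *)

From HB Require Import structures.
From mathcomp Require Import all_boot all_order all_algebra.
Set Implicit Arguments. Unset Strict Implicit. Unset Printing Implicit Defensive.
Import Order.TTheory GRing.Theory Num.Theory.

Section Detection.
Variables (V E : finType) (C : V -> {set E}).

Definition CS (S : {set V}) : {set E} := \bigcup_(i in S) C i.

Definition Fdet (S : {set V}) (T : {set E}) : nat := #|CS S :&: T|.

Definition set_cover (S : {set V}) : bool := CS S == [set: E].
Definition set_packing (T : {set E}) : bool := [forall i, #|C i :&: T| <= 1].

(* n^* : minimum size of a set cover (setT is a cover when every edge is monitored). *)
Definition n_star : nat := \big[minn/#|V|]_(S : {set V} | set_cover S) #|S|.
Definition m_star : nat := \max_(T : {set E} | set_packing T) #|T|.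

Definition A1 (b1 : nat) (S : {set V}) : bool := #|S| <= b1.
Definition A2 (b2 : nat) (T : {set E}) : bool := #|T| <= b2.

Variable R : realFieldType.
Local Open Scope ring_scope.

Definition mixed (X : finType) (A : pred X) (s : X -> R) : Prop :=
  (forall x, 0 <= s x) /\ (forall x, ~~ A x -> s x = 0) /\ \sum_x s x = 1.

Definition U1 (s1 : {set V} -> R) (s2 : {set E} -> R) : R :=
  \sum_(S : {set V}) \sum_(T : {set E}) s1 S * s2 T * (Fdet S T)%:R.

Definition U2 (s1 : {set V} -> R) (s2 : {set E} -> R) : R :=
  \sum_(S : {set V}) \sum_(T : {set E}) s1 S * s2 T * ((#|T|)%:R - (Fdet S T)%:R).

Definition nash (b1 b2 : nat) (s1 : {set V} -> R) (s2 : {set E} -> R) : Prop :=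
  [/\ mixed (A1 b1) s1, mixed (A2 b2) s2,
      (forall s1', mixed (A1 b1) s1' -> U1 s1' s2 <= U1 s1 s2) &
      (forall s2', mixed (A2 b2) s2' -> U2 s1 s2' <= U2 s1 s2)].

End Detection.

(* Let q be the edge marginals of the attacker's equilibrium strategy in Gamma(b1, 1),
   p the detection probabilities under sigma^1 and W the attacker's payoff.  Best
   responses give 1 - p e <= W for every edge, with equality where q e > 0, and W > 0
   because no set of b1 < n^* nodes is a cover; hence q sums to 1 and every inspected
   set S has cover weight q(C_S) = 1 - W, the inspector's payoff.  Exchanging one node
   of such an S that misses x for a node monitoring x gives b1 q x <= 1 - W, and a
   maximum packing gives m^* (1 - W) <= b1, so b2 q x <= 1 whenever b2 <= m^*.  The
   vertices of {r in [0,1]^E | sum r <= b2} are indicators of sets of size at most b2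
   (pipage rounding), so b2 q is the marginal vector of a mixed attack of budget b2.
   Both payoffs depend on an attack only through its marginals, which are scaled by
   b2, so this attack is a best response to sigma^1 and sigma^1 stays one to it. *)

From HB Require Import structures.
From mathcomp Require Import all_boot all_order all_algebra.
From mathcomp Require Import ring lra.
Import Order.TTheory GRing.Theory Num.Theory.

Set Implicit Arguments. Unset Strict Implicit. Unset Printing Implicit Defensive.

Section MixedStrategies.
Local Open Scope ring_scope.
Variables (R : realFieldType) (X : finType).
Implicit Types (A : pred X) (s w f : X -> R).

Lemma mixed_support A s x : mixed A s -> s x != 0 -> A x.
Proof. by case=> _ [s0 _] nz; apply: contraT => /s0 sx0; rewrite sx0 eqxx in nz. Qed.

Definition dirac (x : X) : X -> R := fun y => (y == x)%:R.

Lemma sum_dirac_mul x f : \sum_y dirac x y * f y = f x.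
Proof.
by rewrite (bigD1 x) //= /dirac eqxx mul1r big1 ?addr0 // => y /negbTE ->; rewrite mul0r.
Qed.

Lemma sum_dirac x : \sum_y dirac x y = 1.
Proof. by rewrite (bigD1 x) //= /dirac eqxx big1 ?addr0 // => y /negbTE ->. Qed.

Lemma mixed_dirac A x : A x -> mixed A (dirac x).
Proof.
move=> Ax; split; first by move=> y; rewrite ler0n.
split; last exact: sum_dirac.
by move=> y; apply: contraNeq; rewrite pnatr_eq0 eqb0 negbK => /eqP ->.
Qed.

Lemma mean_le w f c :
  (forall x, 0 <= w x) -> (forall x, w x != 0 -> f x <= c) ->
  \sum_x w x * f x <= (\sum_x w x) * c.
Proof.
move=> w0 fc; rewrite mulr_suml; apply: ler_sum => x _.
have [->|nz] := eqVneq (w x) 0; first by rewrite !mul0r.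
by rewrite ler_wpM2l // fc.
Qed.

Lemma mean_eq_max w f c :
  (forall x, 0 <= w x) -> \sum_x w x = 1 -> (forall x, w x != 0 -> f x <= c) ->
  \sum_x w x * f x = c -> forall x, w x != 0 -> f x = c.
Proof.
move=> w0 w1 fc mean x nz.
have gap0 : \sum_y w y * (c - f y) = 0.
  by under eq_bigr do rewrite mulrBr; rewrite sumrB -mulr_suml w1 mul1r mean subrr.
have gap_ge0 y : true -> 0 <= w y * (c - f y).
  have [->|nzy] := eqVneq (w y) 0; first by rewrite mul0r.
  by rewrite mulr_ge0 // subr_ge0 fc.
move/eqP: (psumr_eq0P gap_ge0 gap0 (i := x) isT); rewrite mulf_eq0 (negbTE nz) /=.
by rewrite subr_eq0 => /eqP.
Qed.

End MixedStrategies.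

Section Incidence.
Local Open Scope ring_scope.
Variables (R : realFieldType) (X Y : finType) (f : X -> {set Y}).

Lemma exchange_incidence (s : X -> R) (q : Y -> R) :
  \sum_x s x * \sum_(y in f x) q y = \sum_y q y * \sum_(x | y \in f x) s x.
Proof.
under eq_bigr do rewrite mulr_sumr.
rewrite (exchange_big_dep xpredT) //=; apply: eq_bigr => y _.
by rewrite mulr_sumr; apply: eq_bigr => x _; rewrite mulrC.
Qed.

Lemma sum_incidence_in (s : X -> R) (A : {set Y}) :
  \sum_(y in A) \sum_(x | y \in f x) s x = \sum_x s x * #|A :&: f x|%:R.
Proof.
rewrite (exchange_big_dep xpredT) //=; apply: eq_bigr => x _.
rewrite (eq_bigl (mem (A :&: f x))) => [|y]; last by rewrite !inE.
by rewrite sumr_const mulr_natr.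
Qed.

End Incidence.

Section Marginals.
Local Open Scope ring_scope.
Variables (R : realFieldType) (E : finType).
Implicit Types (s : {set E} -> R) (A T : {set E}).

Definition marginal s (e : E) : R := \sum_(T : {set E} | e \in T) s T.

Lemma marginal_ge0 s e : (forall T, 0 <= s T) -> 0 <= marginal s e.
Proof. by move=> s_ge0; exact: sumr_ge0. Qed.

Lemma sum_marginal_in s A : \sum_(e in A) marginal s e = \sum_T s T * #|A :&: T|%:R.
Proof. exact: (sum_incidence_in id). Qed.

Lemma sum_marginal s : \sum_e marginal s e = \sum_T s T * #|T|%:R.
Proof.
transitivity (\sum_(e in [set: E]) marginal s e); first by apply: eq_bigl => e; rewrite inE.
by rewrite sum_marginal_in; under eq_bigr do rewrite setTI.
Qed.

Lemma marginal_dirac T e : marginal (dirac R T) e = (e \in T)%:R.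
Proof.
rewrite /marginal big_mkcond /= -[RHS](sum_dirac_mul T (fun T' => (e \in T')%:R)).
by apply: eq_bigr => T' _; case: (e \in T'); rewrite ?mulr1 ?mulr0.
Qed.

Lemma sum_marginal_dirac1 x (f : E -> R) :
  \sum_e marginal (dirac R [set x]) e * f e = f x.
Proof.
by rewrite -(sum_dirac_mul x f); apply: eq_bigr => e _; rewrite marginal_dirac in_set1.
Qed.

End Marginals.

Section Rounding.
Local Open Scope ring_scope.
Variables (R : realFieldType) (E : finType).
Implicit Types (r : E -> R) (k : nat).

Definition fractional r : {set E} := [set e | 0 < r e < 1].

Definition realizable k r : Prop := exists2 s, mixed (A2 k) s & marginal s =1 r.

Lemma eq_realizable k r r' : r =1 r' -> realizable k r -> realizable k r'.
Proof. by move=> rr' [s smix sr]; exists s => // e; rewrite sr. Qed.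

Lemma realizable_indicator k (T : {set E}) :
  (#|T| <= k)%N -> realizable k (fun e => (e \in T)%:R).
Proof. by move=> Tk; exists (dirac R T); [exact: mixed_dirac | exact: marginal_dirac]. Qed.

Lemma realizable_convex k r r1 r2 (l : R) :
  0 <= l <= 1 -> r =1 (fun e => l * r1 e + (1 - l) * r2 e) ->
  realizable k r1 -> realizable k r2 -> realizable k r.
Proof.
move=> /andP[l0 l1] rE [s1 [s1_ge0 [s1_out s1_sum]] s1r] [s2 [s2_ge0 [s2_out s2_sum]] s2r].
exists (fun T => l * s1 T + (1 - l) * s2 T); last first.
  move=> e; rewrite /marginal big_split -!mulr_sumr.
  by rewrite -/(marginal s1 e) -/(marginal s2 e) s1r s2r rE.
split; first by move=> T; rewrite addr_ge0 ?mulr_ge0 ?subr_ge0.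
split; first by move=> T kT; rewrite s1_out ?s2_out // !mulr0 addr0.
by rewrite big_split /= -!mulr_sumr s1_sum s2_sum; ring.
Qed.

Lemma sum_indicator (A : {set E}) : \sum_e (e \in A)%:R = #|A|%:R :> R.
Proof. by rewrite -sum1_card natr_sum [RHS]big_mkcond; apply: eq_bigr => e _; case: (e \in A). Qed.

Lemma integral_indicator r :
  (forall e, 0 <= r e <= 1) -> fractional r = set0 ->
  r =1 (fun e => (e \in [set e | r e == 1])%:R).
Proof.
move=> r01 fr0 e; have /andP[r0 r1] := r01 e; rewrite inE.
have : e \notin fractional r by rewrite fr0 inE.
rewrite !inE negb_and -!leNgt => /orP[re0|re1].
  have -> : r e = 0 by apply/eqP; rewrite eq_le re0 r0.
  by rewrite eq_sym oner_eq0.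
have -> : r e = 1 by apply/eqP; rewrite eq_le r1 re1.
by rewrite eqxx.
Qed.

Lemma sum_integral r :
  (forall e, 0 <= r e <= 1) -> fractional r = set0 ->
  \sum_e r e = #|[set e | r e == 1]|%:R.
Proof.
by move=> r01 fr0; rewrite (eq_bigr _ (fun e _ => integral_indicator r01 fr0 e)) sum_indicator.
Qed.

Lemma realizable_integral k r :
  (forall e, 0 <= r e <= 1) -> fractional r = set0 -> \sum_e r e <= k%:R ->
  realizable k r.
Proof.
move=> r01 fr0; rewrite sum_integral // ler_nat => k1.
exact: eq_realizable (fun e => esym (integral_indicator r01 fr0 e)) (realizable_indicator k1).
Qed.

Lemma sum_update r a (c : R) : \sum_e [eta r with a |-> c] e = \sum_e r e - r a + c.
Proof.
rewrite (bigD1 a) // [in RHS](bigD1 a) //= eqxx.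
have -> : \sum_(e | e != a) (if e == a then c else r e) = \sum_(e | e != a) r e.
  by apply: eq_bigr => e /negbTE ->.
ring.
Qed.

Lemma realizable_one_fractional k r a :
  (forall e, 0 <= r e <= 1) -> \sum_e r e <= k%:R -> fractional r = [set a] ->
  realizable k r.
Proof.
move=> r01 rk fra; have /andP[ra0 ra1] : 0 < r a < 1 by have := set11 a; rewrite -fra inE.
have upd01 c : 0 <= c <= 1 -> forall e, 0 <= [eta r with a |-> c] e <= 1.
  by move=> c01 e /=; case: ifP.
have upd_integral c : ~~ (0 < c < 1) -> fractional [eta r with a |-> c] = set0.
  move=> c_int; apply/setP => e; rewrite !inE /=; case: eqP => [_|/eqP ea]; first exact: negbTE.
  by apply: contraNF ea => re; rewrite -in_set1 -fra inE.
have up01 : forall e, 0 <= [eta r with a |-> 1] e <= 1 by apply: upd01; rewrite ler01 lexx.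
have down01 : forall e, 0 <= [eta r with a |-> 0] e <= 1 by apply: upd01; rewrite lexx ler01.
have [up_int down_int] :
    fractional [eta r with a |-> 1] = set0 /\ fractional [eta r with a |-> 0] = set0.
  by split; apply: upd_integral; rewrite ltxx ?andbF.
have down_le_k : \sum_e [eta r with a |-> 0] e <= k%:R by rewrite sum_update; lra.
have up_le_k : \sum_e [eta r with a |-> 1] e <= k%:R.
  have down_sum := sum_integral down01 down_int; rewrite sum_update in down_sum.
  have down_lt_k : (#|[set e | [eta r with a |-> 0%R] e == 1%R]| < k)%N.
    by rewrite -(ltr_nat R) -down_sum; lra.
  rewrite sum_update; move: down_lt_k; rewrite -(ler_nat R) -natr1 -down_sum; lra.
apply: (@realizable_convex _ _ [eta r with a |-> 1] [eta r with a |-> 0] (r a)).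
- by rewrite !ltW.
- by move=> e /=; case: eqP => [->|_]; ring.
- exact: realizable_integral.
- exact: realizable_integral.
Qed.

Definition transfer r a b (t : R) e : R := r e + t * (dirac R a e - dirac R b e).

Section Transfer.
Variables (r : E -> R) (a b : E) (t : R).
Hypothesis ab : a != b.

Lemma transfer_a : transfer r a b t a = r a + t.
Proof. by rewrite /transfer /dirac eqxx (negbTE ab) subr0 mulr1. Qed.

Lemma transfer_b : transfer r a b t b = r b - t.
Proof. by rewrite /transfer /dirac eqxx eq_sym (negbTE ab) sub0r mulrN1. Qed.

Lemma transfer_other e : e != a -> e != b -> transfer r a b t e = r e.
Proof. by rewrite /transfer /dirac => /negbTE -> /negbTE ->; rewrite subrr mulr0 addr0. Qed.

Lemma sum_transfer : \sum_e transfer r a b t e = \sum_e r e.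
Proof. by rewrite big_split /= -mulr_sumr sumrB !sum_dirac subrr mulr0 addr0. Qed.

End Transfer.

(* Shifting mass between a and b in either direction until one of them becomes
   integral writes r as a convex combination of two vectors with fewer fractional
   coordinates. *)
Lemma realizable_two_fractional k r a b :
  (forall e, 0 <= r e <= 1) -> \sum_e r e <= k%:R ->
  a \in fractional r -> b \in fractional r -> a != b ->
  (forall r', (forall e, 0 <= r' e <= 1) -> \sum_e r' e <= k%:R ->
     fractional r' \proper fractional r -> realizable k r') ->
  realizable k r.
Proof.
move=> r01 rk ar br ab IH.
have /andP[ra0 ra1] : 0 < r a < 1 by rewrite inE in ar.
have /andP[rb0 rb1] : 0 < r b < 1 by rewrite inE in br.
pose t1 := Num.min (1 - r a) (r b); pose t2 := Num.min (r a) (1 - r b).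
have /andP[t1a t1b] : (t1 <= 1 - r a) && (t1 <= r b) by rewrite -le_min.
have /andP[t2a t2b] : (t2 <= r a) && (t2 <= 1 - r b) by rewrite -le_min.
have t1_gt0 : 0 < t1 by rewrite lt_min subr_gt0 ra1 rb0.
have t2_gt0 : 0 < t2 by rewrite lt_min subr_gt0 ra0 rb1.
have step t : - t2 <= t <= t1 ->
    (a \notin fractional (transfer r a b t)) || (b \notin fractional (transfer r a b t)) ->
    realizable k (transfer r a b t).
  move=> /andP[t_lo t_hi] leaves; apply: IH.
  - move=> e; have [->|ea] := eqVneq e a; first by rewrite transfer_a //; apply/andP; split; lra.
    have [->|eb] := eqVneq e b; first by rewrite transfer_b //; apply/andP; split; lra.
    by rewrite transfer_other.
  - by rewrite sum_transfer.
  - apply/properP; split; last by case/orP: leaves => ?; [exists a | exists b].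
    apply/subsetP => e; have [->|ea] := eqVneq e a; first by rewrite ar.
    have [->|eb] := eqVneq e b; first by rewrite br.
    by rewrite !inE transfer_other.
apply: (@realizable_convex _ _ (transfer r a b t1) (transfer r a b (- t2)) (t2 / (t1 + t2))).
- by rewrite divr_ge0 ?ler_pdivrMr ?mul1r; lra.
- move=> e; rewrite /transfer; field; lra.
- apply: step; first by apply/andP; split; lra.
  rewrite !inE transfer_a ?transfer_b // /t1 minEle; case: ifP => _.
    have -> : r a + (1 - r a) = 1 by ring.
    by rewrite ltxx andbF.
  by rewrite subrr ltxx orbT.
- apply: step; first by apply/andP; split; lra.
  rewrite !inE transfer_a ?transfer_b // /t2 minEle; case: ifP => _.
    by rewrite addrN ltxx.
  have -> : r b - - (1 - r b) = 1 by ring.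
  by rewrite ltxx andbF orbT.
Qed.

Theorem realizable_rounding k r :
  (forall e, 0 <= r e <= 1) -> \sum_e r e <= k%:R -> realizable k r.
Proof.
move: {2}#|fractional r| (leqnn #|fractional r|) => n.
elim: n r => [|n IH] r + r01 rk.
  by rewrite leqn0 cards_eq0 => /eqP fr0; exact: realizable_integral.
move=> frn; have [fr0|[a ar]] := set_0Vmem (fractional r).
  exact: realizable_integral.
have [fra|[b]] := set_0Vmem (fractional r :\ a).
  by apply: (realizable_one_fractional r01 rk); rewrite -(setD1K ar) fra setU0.
rewrite in_setD1 eq_sym => /andP[ab br].
apply: (realizable_two_fractional r01 rk ar br ab) => r' r'01 r'k /proper_card r'_lt.
apply: IH => //.
by rewrite -ltnS (leq_trans r'_lt).
Qed.

End Rounding.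

Section DetectionGame.
Local Open Scope ring_scope.
Variables (V E : finType) (C : V -> {set E}) (R : realFieldType).
Implicit Types (q : E -> R) (S A : {set V}).

Definition cover_weight q S : R := \sum_(e in CS C S) q e.

Definition detection (s1 : {set V} -> R) (e : E) : R := \sum_(S | e \in CS C S) s1 S.

Lemma cover_weightE q S : cover_weight q S = \sum_e q e * (e \in CS C S)%:R.
Proof.
by rewrite /cover_weight big_mkcond; apply: eq_bigr => e _; case: (e \in _); rewrite ?mulr1 ?mulr0.
Qed.

Lemma U1E (s1 : {set V} -> R) (s2 : {set E} -> R) :
  U1 C s1 s2 = \sum_S s1 S * cover_weight (marginal s2) S.
Proof.
apply: eq_bigr => S _; rewrite /cover_weight sum_marginal_in mulr_sumr.
by apply: eq_bigr => T _; rewrite mulrA.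
Qed.

Lemma U2E (s1 : {set V} -> R) (s2 : {set E} -> R) :
  U2 C s1 s2 = \sum_S s1 S * (\sum_e marginal s2 e - cover_weight (marginal s2) S).
Proof.
apply: eq_bigr => S _; rewrite sum_marginal /cover_weight sum_marginal_in -sumrB mulr_sumr.
by apply: eq_bigr => T _; ring.
Qed.

Lemma sum_cover_weight (s1 : {set V} -> R) q :
  \sum_S s1 S * cover_weight q S = \sum_e q e * detection s1 e.
Proof. exact: exchange_incidence. Qed.

Lemma U2_detection (s1 : {set V} -> R) (s2 : {set E} -> R) : \sum_S s1 S = 1 ->
  U2 C s1 s2 = \sum_e marginal s2 e * (1 - detection s1 e).
Proof.
move=> s1_sum; rewrite U2E; under eq_bigr do rewrite mulrBr.
rewrite sumrB -mulr_suml s1_sum mul1r sum_cover_weight.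
by under [RHS]eq_bigr do rewrite mulrBr mulr1; rewrite sumrB.
Qed.

Lemma detection_lt1 (s1 : {set V} -> R) e : (forall S, 0 <= s1 S) -> \sum_S s1 S = 1 ->
  (detection s1 e < 1) = [exists S, (s1 S != 0) && (e \notin CS C S)].
Proof.
move=> s1_ge0 s1_sum.
have -> : detection s1 e = 1 - \sum_(S | e \notin CS C S) s1 S.
  by rewrite -s1_sum (bigID (fun S => e \in CS C S)) /= addrK.
have sum_ge0 : 0 <= \sum_(S | e \notin CS C S) s1 S by exact: sumr_ge0.
rewrite ltrBlDr ltrDl lt_def sum_ge0 andbT (psumr_neq0 _ (fun S _ => s1_ge0 S)).
apply/hasP/existsP => [[S _ /andP[eS s1S]]|[S /andP[s1S eS]]]; exists S.
- by rewrite eS andbT; apply: contraTneq s1S => ->; rewrite ltxx.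
- by rewrite mem_index_enum.
- by rewrite eS lt_def s1S s1_ge0.
Qed.

Lemma n_star_le_cover S : set_cover C S -> (n_star C <= #|S|)%N.
Proof. by move=> coverS; rewrite /n_star -minEnat; exact: (bigmin_le_cond (T := nat)). Qed.

Lemma m_star_packing : exists2 P, set_packing C P & #|P| = m_star C.
Proof.
have : (0 < #|set_packing C|)%N.
  by apply/card_gt0P; exists set0; apply/forallP => i; rewrite setI0 cards0.
by move=> /(eq_bigmax_cond (fun T : {set E} => #|T|))[P packP maxP]; exists P.
Qed.

Lemma card_packing_cover S (P : {set E}) : set_packing C P -> (#|P :&: CS C S| <= #|S|)%N.
Proof.
move=> /forallP packP.
have cardE (A : {set E}) : #|P :&: A| = \sum_(e in P) nat_of_bool (e \in A).
  rewrite -sum1_card big_mkcond [RHS]big_mkcond /=; apply: eq_bigr => e _.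
  by rewrite inE; case: (e \in P); case: (e \in A).
apply: (@leq_trans (\sum_(v in S) #|P :&: C v|)); last first.
  by rewrite -sum1_card; apply: leq_sum => v _; rewrite setIC; exact: packP.
rewrite cardE; under [X in (_ <= X)%N]eq_bigr do rewrite cardE.
rewrite exchange_big leq_sum // => e _.
case: (boolP (e \in CS C S)) => // /bigcupP[v vS ev].
by rewrite (bigD1 v) //= ev leq_addr.
Qed.

Lemma sum_detection_packing b (s1 : {set V} -> R) (P : {set E}) :
  mixed (A1 b) s1 -> set_packing C P -> \sum_(e in P) detection s1 e <= b%:R.
Proof.
move=> s1_mix packP; have [s1_ge0 [_ s1_sum]] := s1_mix.
rewrite sum_incidence_in; apply: le_trans (mean_le (c := b%:R) s1_ge0 _) _.
  move=> S s1S; rewrite ler_nat (leq_trans (card_packing_cover S packP)) //.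
  exact: mixed_support s1_mix s1S.
by rewrite s1_sum mul1r.
Qed.

Lemma CS_subset A S : A \subset S -> CS C A \subset CS C S.
Proof.
move=> /subsetP AS; apply/subsetP => e /bigcupP[v vA ev].
by apply/bigcupP; exists v; first exact: AS.
Qed.

Section CoverWeight.
Variables (q : E -> R).
Hypothesis q_ge0 : forall e, 0 <= q e.

Lemma cover_weight_setU1 A u x : x \notin CS C A -> x \in C u ->
  cover_weight q A + q x <= cover_weight q (u |: A).
Proof.
move=> xA xu; rewrite /cover_weight addrC -big_setU1 //=.
rewrite [X in _ <= X](big_setID (x |: CS C A)) /= (setIidPr _) ?lerDl ?sumr_ge0 //.
rewrite subUset sub1set CS_subset ?subsetUr ?andbT //.
by apply/bigcupP; exists u; rewrite ?setU11.
Qed.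

Lemma sum_cover_weight_loss S :
  \sum_(v in S) (cover_weight q S - cover_weight q (S :\ v)) <= cover_weight q S.
Proof.
under eq_bigr do rewrite !cover_weightE -sumrB.
rewrite cover_weightE exchange_big /=; apply: ler_sum => e _.
under eq_bigr do rewrite -mulrBr.
rewrite -mulr_sumr ler_wpM2l //.
have [/bigcupP[w wS ew]|eS] := boolP (e \in CS C S); last first.
  rewrite big1 // => v vS.
  by rewrite (contraNF (subsetP (CS_subset (subsetDl S [set v])) e)) // subrr.
rewrite (bigD1 w) //= big1 ?addr0 => [|v /andP[vS vw]].
  by case: (e \in CS C (S :\ w)); rewrite ?subrr ?subr0.
suff -> : e \in CS C (S :\ v) by rewrite subrr.
by apply/bigcupP; exists w; rewrite // !inE eq_sym vw.
Qed.

(* When #|S| = b, swapping any node v of S for u keeps the budget, so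
   w (S :\ v) + q x <= M; the losses w S - w (S :\ v) add up to at most w S = M, since
   an edge is covered by S :\ v for all but at most one v of S. *)
Lemma cover_weight_budget b M S x u :
  (forall S', (#|S'| <= b)%N -> cover_weight q S' <= M) ->
  cover_weight q S = M -> (#|S| <= b)%N -> x \notin CS C S -> x \in C u ->
  b%:R * q x <= M.
Proof.
move=> wM wS Sb xS xu.
have uS : u \notin S by apply: contra xS => uS; apply/bigcupP; exists u.
have [Sb_eq|Sb_lt] := eqVneq #|S| b; last first.
  have M_ge0 : 0 <= M by rewrite -wS sumr_ge0.
  have := cover_weight_setU1 xS xu; have := wM (u |: S).
  rewrite cardsU1 uS add1n ltn_neqAle Sb_lt Sb wS => /(_ isT) uS_M S_qx.
  by apply: le_trans M_ge0; rewrite mulr_ge0_le0 //; lra.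
have remove v : v \in S -> cover_weight q (S :\ v) + q x <= M.
  move=> vS; apply: le_trans (cover_weight_setU1 _ xu) (wM _ _).
    by apply: contra xS; apply/subsetP/CS_subset/subsetDl.
  by rewrite cardsU1 !inE negb_and uS orbT -Sb_eq (cardsD1 v S) vS.
have : \sum_(v in S) (cover_weight q (S :\ v) + q x) <= \sum_(v in S) M by exact: ler_sum.
have := sum_cover_weight_loss S.
rewrite sumrB big_split /= !sumr_const Sb_eq wS -(mulr_natl M) -(mulr_natl (q x)).
lra.
Qed.

End CoverWeight.

End DetectionGame.

Section Equilibrium.
Local Open Scope ring_scope.
Variables (V E : finType) (C : V -> {set E}) (R : realFieldType).
Hypothesis covered : forall e : E, exists i : V, e \in C i.
Variables (b1 : nat) (s1 : {set V} -> R) (s2 : {set E} -> R).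
Hypotheses (b1_gt0 : (0 < b1)%N) (b1_lt_n_star : (b1 < n_star C)%N).
Hypothesis eq1 : nash C b1 1 s1 s2.

Implicit Types (S : {set V}) (e x : E).

Local Notation q := (marginal s2).
Local Notation p := (detection C s1).
Local Notation W := (U2 C s1 s2).

Let s1_mix : mixed (A1 b1) s1. Proof. by case: eq1. Qed.
Let s1_ge0 : forall S, 0 <= s1 S. Proof. by case: s1_mix. Qed.
Let s1_sum : \sum_S s1 S = 1. Proof. by case: s1_mix => _ []. Qed.
Let q_ge0 e : 0 <= q e. Proof. by case: eq1 => _ [s2_ge0 _] _ _; exact: marginal_ge0. Qed.
Let inspector_br s : mixed (A1 b1) s -> U1 C s s2 <= U1 C s1 s2.
Proof. by case: eq1 => _ _ br _; exact: br. Qed.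
Let attacker_br s : mixed (A2 1) s -> U2 C s1 s <= W.
Proof. by case: eq1 => _ _ _ br; exact: br. Qed.

Lemma undetected_le_attacker_value e : 1 - p e <= W.
Proof.
have e_budget : A2 1 [set e] by rewrite /A2 cards1.
by have := attacker_br (mixed_dirac R e_budget); rewrite U2_detection // sum_marginal_dirac1.
Qed.

Lemma attacker_value_ge0 : 0 <= W.
Proof.
have set0_budget : A2 1 (set0 : {set E}) by rewrite /A2 cards0.
have := attacker_br (mixed_dirac R set0_budget); rewrite U2_detection // big1 // => e _.
by rewrite marginal_dirac in_set0 mul0r.
Qed.

Lemma attacker_value_gt0 : 0 < W.
Proof.
rewrite lt_def attacker_value_ge0 andbT; apply/negP => /eqP W0.
have [S /andP[_ s1S]] : exists S, true && (0 < s1 S).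
  apply: psumr_neq0P => [S _|]; first exact: s1_ge0.
  by rewrite s1_sum => /eqP; rewrite oner_eq0.
have [e eS] : exists e, e \notin CS C S.
  apply/existsP; apply: contraTT b1_lt_n_star; rewrite negb_exists -leqNgt => /forallP S_cover.
  apply: leq_trans (n_star_le_cover _) _; first by apply/eqP/setP => e; rewrite inE; apply/negPn.
  by apply: mixed_support s1_mix _; rewrite gt_eqF.
have := undetected_le_attacker_value e; rewrite W0.
have : p e < 1 by rewrite detection_lt1 //; apply/existsP; exists S; rewrite eS gt_eqF.
lra.
Qed.

Lemma sum_attack_marginal : \sum_e q e = 1.
Proof.
have s2_mix : mixed (A2 1) s2 by case: eq1.
apply/eqP; rewrite eq_le; apply/andP; split.
  have [s2_ge0 [_ s2_sum]] := s2_mix.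
  rewrite sum_marginal -[X in _ <= X]s2_sum -[X in _ <= X]mulr1.
  by apply: mean_le => // T /(mixed_support s2_mix); rewrite /A2 -(ler_nat R).
have := mean_le q_ge0 (fun e _ => undetected_le_attacker_value e).
by rewrite -U2_detection // -{1}[W]mul1r ler_pM2r // attacker_value_gt0.
Qed.

Lemma attack_support_detection x : q x != 0 -> p x = 1 - W.
Proof.
move=> qx; suff : 1 - p x = W by move=> <-; ring.
apply: (@mean_eq_max _ _ q (fun e => 1 - p e) W q_ge0 sum_attack_marginal _ _ x qx).
  by move=> e _; exact: undetected_le_attacker_value.
by rewrite U2_detection.
Qed.

Lemma inspector_value : U1 C s1 s2 = 1 - W.
Proof.
rewrite U1E sum_cover_weight U2_detection //.
under [in RHS]eq_bigr do rewrite mulrBr mulr1.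
by rewrite sumrB sum_attack_marginal; ring.
Qed.

Lemma cover_weight_le_inspector_value S : (#|S| <= b1)%N -> cover_weight C q S <= 1 - W.
Proof.
move=> S_budget; have := inspector_br (mixed_dirac R (S_budget : A1 b1 S)).
by rewrite U1E sum_dirac_mul inspector_value.
Qed.

Lemma cover_weight_on_support S : s1 S != 0 -> cover_weight C q S = 1 - W.
Proof.
apply: mean_eq_max => // [S' s1S'|]; last by rewrite -U1E inspector_value.
exact/cover_weight_le_inspector_value/(mixed_support s1_mix s1S').
Qed.

Lemma budget_marginal_le_inspector_value x : b1%:R * q x <= 1 - W.
Proof.
have [->|qx] := eqVneq (q x) 0.
  by rewrite mulr0 -inspector_value U1E sumr_ge0 // => S _; rewrite mulr_ge0 ?sumr_ge0.
have : p x < 1 by rewrite attack_support_detection // gtrBl attacker_value_gt0.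
rewrite detection_lt1 // => /existsP[S /andP[s1S xS]].
have [u xu] := covered x.
apply: (cover_weight_budget q_ge0 cover_weight_le_inspector_value
          (cover_weight_on_support s1S) _ xS xu).
exact: mixed_support s1_mix s1S.
Qed.

Lemma m_star_inspector_value_le : (m_star C)%:R * (1 - W) <= b1%:R.
Proof.
have [P packP <-] := m_star_packing C.
apply: le_trans (sum_detection_packing s1_mix packP).
rewrite mulr_natl -sumr_const; apply: ler_sum => e _.
by have := undetected_le_attacker_value e; lra.
Qed.

Lemma scaled_marginal_le1 b2 x : (b2 <= m_star C)%N -> b2%:R * q x <= 1.
Proof.
move=> b2_m; have b1_pos : 0 < b1%:R :> R by rewrite ltr0n.
have m_qx : (m_star C)%:R * q x <= 1.
  rewrite -(ler_pM2l b1_pos) mulr1 mulrCA; apply: le_trans m_star_inspector_value_le.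
  by rewrite ler_wpM2l ?ler0n ?budget_marginal_le_inspector_value.
by apply: le_trans m_qx; rewrite ler_wpM2r // ler_nat.
Qed.

Lemma nash_scaled_attack b2 s :
  mixed (A2 b2) s -> marginal s =1 (fun e => b2%:R * q e) -> nash C b1 b2 s1 s.
Proof.
move=> s_mix s_q.
have U1_scaled t : U1 C t s = b2%:R * U1 C t s2.
  rewrite !U1E mulr_sumr; apply: eq_bigr => S _.
  by rewrite /cover_weight (eq_bigr _ (fun e _ => s_q e)) -mulr_sumr mulrCA.
split=> // [t t_mix|t [t_ge0 [t_out t_sum]]].
  by rewrite !U1_scaled ler_wpM2l ?ler0n ?inspector_br.
have -> : U2 C s1 s = b2%:R * W.
  rewrite !U2_detection //; under eq_bigr do rewrite s_q -mulrA.
  by rewrite -mulr_sumr.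
rewrite U2_detection //.
have t_marg_ge0 e : 0 <= marginal t e by exact: marginal_ge0.
apply: le_trans (mean_le t_marg_ge0 (fun e _ => undetected_le_attacker_value e)) _.
rewrite sum_marginal ler_wpM2r ?attacker_value_ge0 //.
apply: le_trans (mean_le (c := b2%:R) t_ge0 _) _; last by rewrite t_sum mul1r.
by move=> T tT; rewrite ler_nat; apply: (mixed_support (conj t_ge0 (conj t_out t_sum)) tT).
Qed.

End Equilibrium.

Unset Implicit Arguments.

Theorem mainTheorem14 (V E : finType) (C : V -> {set E}) (R : realFieldType)
  (hV : 0 < #|V|) (hE : 0 < #|E|)
  (hcov : forall e : E, exists i : V, e \in C i)
  (b1 : nat) (hb1 : 0 < b1) (hb1n : b1 < n_star C)
  (s1 : {set V} -> R) (s2 : {set E} -> R) :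
  nash C b1 1 s1 s2 ->
  forall b2 : nat, 0 < b2 -> b2 < m_star C ->
  exists s2hat : {set E} -> R, nash C b1 b2 s1 s2hat.
Proof.
move=> eq1 b2 _ b2_lt_m.
have [s s_mix s_marginal] : realizable b2 (fun e => (b2%:R * marginal s2 e)%R).
  apply: realizable_rounding => [e|].
    rewrite (scaled_marginal_le1 hcov hb1 hb1n eq1 _ (ltnW b2_lt_m)) andbT.
    by case: eq1 => _ [s2_ge0 _] _ _; rewrite mulr_ge0 ?marginal_ge0.
  by rewrite -mulr_sumr (sum_attack_marginal hb1n eq1) mulr1.
by exists s; exact: nash_scaled_attack s_mix s_marginal.
Qed.
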